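(* Let $L$ be a semiprime right Leibniz algebra and $Q$ an algebra of quotients of $L$. Then for every essential ideal $I$ of $L$, $Q$ is also an algebra of quotients of $I$.
   Context: A right Leibniz algebra satisfies $[x,[y,z]]=[[x,y],z]-[[x,z],y]$. Ideals: subspaces $I$ with $[I,L]\subseteq I$, $[L,I]\subseteq I$; $L$ is semiprime if $[I,I]\ne\{0\}$ for every nonzero ideal $I$; an ideal is essential if it meets every nonzero ideal nontrivially. For a subalgebra $K$ of $Q$ and $q\in Q$: for $x\in K$ let $R_x(u)=[u,x]$, $L_x(u)=[x,u]$ on $Q$, $\mathscr{A}(K)$ the associative algebra they generate, ${}_K(q)=\mathbb{F}q+\{\sum\xi_i(q):\xi_i\in\mathscr{A}(K)\}$, $(K:q)=\{x\in K:[x,{}_K(q)]\subseteq K,[{}_K(q),x]\subseteq K\}$. $Q$ is an algebra of quotients of $K$ if for all $p,q\in Q$, $p\ne0$, there is $x\in(K:q)$ with $[x,p]\ne0$ or $y\in(K:q)$ with $[p,y]\ne0$. *)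

From HB Require Import structures.
From mathcomp Require Import all_boot all_algebra.
Set Implicit Arguments. Unset Strict Implicit. Unset Printing Implicit Defensive.
Import GRing.Theory.
Local Open Scope ring_scope.

Section Leibniz.
Variables (F : fieldType) (Q : lmodType F) (br : Q -> Q -> Q).

Definition bracket_bilinear : Prop :=
  (forall (a : F) (x y z : Q), br (a *: x + y) z = a *: br x z + br y z) /\
  (forall (a : F) (x y z : Q), br z (a *: x + y) = a *: br z x + br z y).

Definition right_leibniz : Prop :=
  forall x y z : Q, br x (br y z) = br (br x y) z - br (br x z) y.

Definition subspace (S : Q -> Prop) : Prop :=
  S 0 /\ forall (a : F) (x y : Q), S x -> S y -> S (a *: x + y).

Definition subalgebra (K : Q -> Prop) : Prop :=
  subspace K /\ forall x y, K x -> K y -> K (br x y).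

Definition nonzero_set (S : Q -> Prop) : Prop := exists x, S x /\ x <> 0.

Definition ideal_of (L I : Q -> Prop) : Prop :=
  subspace I /\ (forall x, I x -> L x) /\
  (forall x y, I x -> L y -> I (br x y) /\ I (br y x)).

(* [I,I] <> 0, i.e. the span of brackets of I is nonzero *)
Definition semiprime (L : Q -> Prop) : Prop :=
  forall I, ideal_of L I -> nonzero_set I ->
    exists x y, I x /\ I y /\ br x y <> 0.

Definition essential_ideal (L I : Q -> Prop) : Prop :=
  ideal_of L I /\
  forall J, ideal_of L J -> nonzero_set J ->
    exists x, I x /\ J x /\ x <> 0.

(* A(K): the associative algebra of operators on Q generated by
   R_x = [_, x] and L_x = [x, _] for x in K *)
Inductive inA (K : Q -> Prop) : (Q -> Q) -> Prop :=
| inA_R x : K x -> inA K (fun u => br u x)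
| inA_L x : K x -> inA K (fun u => br x u)
| inA_add f g : inA K f -> inA K g -> inA K (fun u => f u + g u)
| inA_scale (a : F) f : inA K f -> inA K (fun u => a *: f u)
| inA_comp f g : inA K f -> inA K g -> inA K (fun u => f (g u)).

Definition gen_by (K : Q -> Prop) (q : Q) (u : Q) : Prop :=
  exists (lam : F) (xi : Q -> Q), inA K xi /\ u = lam *: q + xi q.

Definition colon (K : Q -> Prop) (q : Q) (x : Q) : Prop :=
  K x /\ forall u, gen_by K q u -> K (br x u) /\ K (br u x).

Definition algebra_of_quotients (K : Q -> Prop) : Prop :=
  forall p q : Q, p <> 0 ->
    exists x, colon K q x /\ (br x p <> 0 \/ br p x <> 0).

End Leibniz.

From mathcomp Require Import all_boot all_algebra.
From Stdlib Require Import Classical.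
Set Implicit Arguments. Unset Strict Implicit. Unset Printing Implicit Defensive.
Import GRing.Theory.
Local Open Scope ring_scope.

(* Because Q is an algebra of quotients of L, every colon ideal (L : q) is
   essential in L, and so is J = (L : q) ∩ I.  The elements of J mapping _L(q)
   into I by brackets on both sides form an ideal S that contains every product
   [m, m'] of elements of J; by semiprimeness such products reach every nonzero
   ideal, so S is essential.  An essential ideal E cannot annihilate a nonzero
   p of Q: otherwise [x, p] or [p, x], for a suitable x in (L : p), would be a
   nonzero element of L annihilating E, and the annihilator of E meets E in an
   ideal with zero square.  Hence some e in S does not annihilate p, and
   e ∈ (I : q) because _I(q) ⊆ _L(q). *)

Section Subspace.
Variables (F : fieldType) (Q : lmodType F) (S : Q -> Prop).
Hypothesis S_subspace : subspace S.

Lemma subspaceD x y : S x -> S y -> S (x + y).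
Proof. by move=> Sx Sy; have := S_subspace.2 1 x y Sx Sy; rewrite scale1r. Qed.

Lemma subspaceZ a x : S x -> S (a *: x).
Proof.
by move=> Sx; have := S_subspace.2 a x 0 Sx S_subspace.1; rewrite addr0.
Qed.

Lemma subspaceB x y : S x -> S y -> S (x - y).
Proof.
by move=> Sx Sy; rewrite -scaleN1r; apply: subspaceD (subspaceZ _ _).
Qed.

End Subspace.

Section RightLeibniz.
Variables (F : fieldType) (Q : lmodType F) (br : Q -> Q -> Q).
Hypotheses (br_bilinear : bracket_bilinear br) (br_leibniz : right_leibniz br).

Lemma br0l x : br 0 x = 0.
Proof. by have := br_bilinear.1 (-1) x x x; rewrite !scaleN1r !addNr. Qed.

Lemma br0r x : br x 0 = 0.
Proof. by have := br_bilinear.2 (-1) x x x; rewrite !scaleN1r !addNr. Qed.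

Lemma brDl x y z : br (x + y) z = br x z + br y z.
Proof. by have := br_bilinear.1 1 x y z; rewrite !scale1r. Qed.

Lemma brDr x y z : br z (x + y) = br z x + br z y.
Proof. by have := br_bilinear.2 1 x y z; rewrite !scale1r. Qed.

Lemma brZl a x z : br (a *: x) z = a *: br x z.
Proof. by have := br_bilinear.1 a x 0 z; rewrite br0l !addr0. Qed.

Lemma brZr a x z : br z (a *: x) = a *: br z x.
Proof. by have := br_bilinear.2 a x 0 z; rewrite br0r !addr0. Qed.

Lemma leibniz_brl x y z : br (br x y) z = br x (br y z) + br (br x z) y.
Proof. by rewrite br_leibniz subrK. Qed.

(* [colon br L q x] unfolds to [L x /\ colon_into L L q x]. *)
Definition colon_into (L P : Q -> Prop) (q x : Q) : Prop :=
  forall u, gen_by br L q u -> P (br x u) /\ P (br u x).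

Definition annihilates (E : Q -> Prop) (w : Q) : Prop :=
  forall e, E e -> br e w = 0 /\ br w e = 0.

Definition bracket_stable (L R : Q -> Prop) : Prop :=
  forall x l, R x -> L l -> R (br x l) /\ R (br l x).

Lemma gen_by_self (L : Q -> Prop) q : L 0 -> gen_by br L q q.
Proof.
move=> L0; exists 1, (fun u => br u 0); split; first exact: inA_R.
by rewrite br0r addr0 scale1r.
Qed.

Lemma gen_by_br (L : Q -> Prop) q l u : L l -> gen_by br L q u ->
  gen_by br L q (br l u) /\ gen_by br L q (br u l).
Proof.
move=> Ll [lam [xi [Axi ->]]]; split.
- exists 0, (fun v => lam *: br l v + br l (xi v)); split.
    apply: inA_add; first exact/inA_scale/inA_L.
    exact: inA_comp (inA_L _ Ll) Axi.
  by rewrite scale0r add0r brDr brZr.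
- exists 0, (fun v => lam *: br v l + br (xi v) l); split.
    apply: inA_add; first exact/inA_scale/inA_R.
    exact: inA_comp (inA_R _ Ll) Axi.
  by rewrite scale0r add0r brDl brZl.
Qed.

Lemma inA_mono (K1 K2 : Q -> Prop) f :
  (forall x, K1 x -> K2 x) -> inA br K1 f -> inA br K2 f.
Proof.
move=> sK12; elim=> {f} [x /sK12|x /sK12|f g _ Af _ Ag|a f _ Af|f g _ Af _ Ag].
- exact: inA_R.
- exact: inA_L.
- exact: inA_add.
- exact: inA_scale.
- exact: inA_comp.
Qed.

Lemma gen_by_mono (K1 K2 : Q -> Prop) q u :
  (forall x, K1 x -> K2 x) -> gen_by br K1 q u -> gen_by br K2 q u.
Proof.
move=> sK12 [lam [xi [Axi ->]]].
by exists lam, xi; split; first exact: inA_mono Axi.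
Qed.

Lemma ideal_stable (L P : Q -> Prop) : ideal_of br L P -> bracket_stable L P.
Proof. by case=> _ []. Qed.

Lemma ideal_sub (L P : Q -> Prop) x : ideal_of br L P -> P x -> L x.
Proof. by case=> _ [sPL _]; apply: sPL. Qed.

Lemma ideal_of_subalgebra (L : Q -> Prop) : subalgebra br L -> ideal_of br L L.
Proof.
case=> L_subspace brL; split=> //; split=> // x l Lx Ll.
by split; apply: brL.
Qed.

Lemma ideal_meet (L K R : Q -> Prop) : ideal_of br L K -> subspace R ->
  bracket_stable L R -> ideal_of br L (fun x => K x /\ R x).
Proof.
move=> [[K0 K_lin] [sKL stK]] [R0 R_lin] stR.
split; [split|split] => [|a x y [Kx Rx] [Ky Ry]|x [/sKL]|x l [Kx Rx] Ll] //.
- by split; [apply: K_lin | apply: R_lin].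
- by have [? ?] := stK x l Kx Ll; have [? ?] := stR x l Rx Ll.
Qed.

Lemma ideal_meet_ideal (L K P : Q -> Prop) :
  ideal_of br L K -> ideal_of br L P ->
  ideal_of br L (fun x => K x /\ P x).
Proof.
by move=> idK P_ideal; apply: ideal_meet idK P_ideal.1 (ideal_stable P_ideal).
Qed.

Lemma essential_meet (L K P : Q -> Prop) :
  essential_ideal br L K -> essential_ideal br L P ->
  essential_ideal br L (fun x => K x /\ P x).
Proof.
move=> [idK essK] [P_ideal essP]; split; first exact: ideal_meet_ideal.
move=> J idJ /(essK J idJ) [x [Kx [Jx x_neq0]]].
have JK_neq0 : nonzero_set (fun x => J x /\ K x) by exists x.
have [y [Py [[Jy Ky] y_neq0]]] := essP _ (ideal_meet_ideal idJ idK) JK_neq0.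
by exists y.
Qed.

Lemma colon_into_subspace (L P : Q -> Prop) q :
  subspace P -> subspace (colon_into L P q).
Proof.
move=> P_subspace; split=> [u _|a x y Cx Cy u Lu].
  by rewrite br0l br0r; split; apply: P_subspace.1.
have [? ?] := Cx u Lu; have [? ?] := Cy u Lu.
rewrite br_bilinear.1 br_bilinear.2.
by split; apply: P_subspace.2.
Qed.

Lemma colon_into_stable (L P : Q -> Prop) q :
  ideal_of br L P -> bracket_stable L (colon_into L P q).
Proof.
move=> P_ideal x l Cx Ll; have stP := ideal_stable P_ideal.
split=> u Lu; have [Llu Lul] := gen_by_br Ll Lu.
- have [Px_lu _] := Cx _ Llu; have [_ Pul_x] := Cx _ Lul.
  have [Pxu_l _] := stP _ _ (Cx u Lu).1 Ll.
  have [Pux_l _] := stP _ _ (Cx u Lu).2 Ll.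
  split; first by rewrite leibniz_brl; apply: (subspaceD P_ideal.1).
  by rewrite br_leibniz; apply: (subspaceB P_ideal.1).
- have [_ Plu_x] := Cx _ Llu; have [_ Pul_x] := Cx _ Lul.
  have [_ Pl_xu] := stP _ _ (Cx u Lu).1 Ll.
  have [Pux_l _] := stP _ _ (Cx u Lu).2 Ll.
  split; first by rewrite leibniz_brl; apply: (subspaceD P_ideal.1).
  by rewrite br_leibniz; apply: (subspaceB P_ideal.1).
Qed.

Lemma colon_ideal (L : Q -> Prop) q :
  subalgebra br L -> ideal_of br L (colon br L q).
Proof.
move=> L_sub; have idL := ideal_of_subalgebra L_sub.
exact: ideal_meet idL (colon_into_subspace L q idL.1) (colon_into_stable idL).
Qed.

Lemma colon_essential (L : Q -> Prop) q : subalgebra br L ->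
  algebra_of_quotients br L -> essential_ideal br L (colon br L q).
Proof.
move=> L_sub L_quot; have idC := colon_ideal q L_sub.
split=> // J idJ [p [Jp p_neq0]].
have [x [Cx brxp_neq0]] := L_quot p q p_neq0.
have [Jxp Jpx] := ideal_stable idJ Jp (ideal_sub idC Cx).
have [Cxp Cpx] := ideal_stable idC Cx (ideal_sub idJ Jp).
by case: brxp_neq0; [exists (br x p) | exists (br p x)].
Qed.

(* The Leibniz identity moves the factor u of [[m, m'], u] and [u, [m, m']]
   onto m or m', which send _L(q) into L. *)
Lemma colon_into_br (L P : Q -> Prop) q m m' : ideal_of br L P ->
  colon br L q m -> colon br L q m' -> P m -> P m' ->
  colon_into L P q (br m m').
Proof.
move=> P_ideal [_ Cm] [_ Cm'] Pm Pm' u Lu; have stP := ideal_stable P_ideal.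
have [Lmu Lum] := Cm u Lu; have [Lm'u Lum'] := Cm' u Lu.
have [Pm_m'u _] := stP _ _ Pm Lm'u; have [_ Pmu_m'] := stP _ _ Pm' Lmu.
have [_ Pum_m'] := stP _ _ Pm' Lum; have [_ Pum'_m] := stP _ _ Pm Lum'.
split; first by rewrite leibniz_brl; apply: (subspaceD P_ideal.1).
by rewrite br_leibniz; apply: (subspaceB P_ideal.1).
Qed.

Lemma essential_of_brackets (L J T : Q -> Prop) :
  semiprime br L -> essential_ideal br L J -> ideal_of br L T ->
  (forall x y, J x -> J y -> T (br x y)) -> essential_ideal br L T.
Proof.
move=> L_semiprime [idJ essJ] idT brJT; split=> // K idK /(essJ K idK).
move=> [x [Jx [Kx x_neq0]]].
have KJ_neq0 : nonzero_set (fun x => K x /\ J x) by exists x.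
have [m [m' [[Km Jm] [[_ Jm'] brmm'_neq0]]]] :=
  L_semiprime _ (ideal_meet_ideal idK idJ) KJ_neq0.
exists (br m m'); split; first exact: brJT.
by split=> //; apply: (ideal_stable idK Km (ideal_sub idJ Jm')).1.
Qed.

Lemma annihilates_subspace (E : Q -> Prop) : subspace (annihilates E).
Proof.
split=> [e _|a x y Ax Ay e Ee]; first by rewrite br0l br0r.
have [ex0 xe0] := Ax e Ee; have [ey0 ye0] := Ay e Ee.
by rewrite br_bilinear.1 br_bilinear.2 ex0 xe0 ey0 ye0 scaler0 addr0.
Qed.

Lemma annihilates_stable (L E : Q -> Prop) :
  ideal_of br L E -> bracket_stable L (annihilates E).
Proof.
move=> idE w l Aw Ll; split=> e Ee; have [Eel Ele] := ideal_stable idE Ee Ll;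
  have [ew0 we0] := Aw e Ee; have [el_w0 _] := Aw _ Eel;
  have [le_w0 w_le0] := Aw _ Ele.
- split; first by rewrite br_leibniz ew0 el_w0 br0l subr0.
  by rewrite leibniz_brl w_le0 we0 br0l addr0.
- split; first by rewrite br_leibniz ew0 el_w0 br0l subr0.
  by rewrite leibniz_brl we0 le_w0 br0r addr0.
Qed.

Lemma annihilator_essential_eq0 (L E : Q -> Prop) c :
  subalgebra br L -> semiprime br L -> essential_ideal br L E ->
  L c -> annihilates E c -> c = 0.
Proof.
move=> L_sub L_semiprime [idE essE] Lc Ac; case: (eqVneq c 0) => // c_neq0.
have idA := ideal_meet (ideal_of_subalgebra L_sub) (annihilates_subspace E)
  (annihilates_stable idE).
have [z [Ez [Az z_neq0]]] : exists z, E z /\ (L z /\ annihilates E z) /\ z <> 0.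
  by apply: essE idA _; exists c; do 2?split=> //; apply/eqP.
have AE_neq0 : nonzero_set (fun x => (L x /\ annihilates E x) /\ E x).
  by exists z.
have [z1 [z2 [[[_ Az1] _] [[_ Ez2] brz_neq0]]]] :=
  L_semiprime _ (ideal_meet_ideal idA idE) AE_neq0.
by case: brz_neq0; case: (Az1 z2 Ez2).
Qed.

Lemma essential_ideal_faithful (L E : Q -> Prop) w :
  subalgebra br L -> semiprime br L -> algebra_of_quotients br L ->
  essential_ideal br L E -> w <> 0 ->
  exists e, E e /\ (br e w <> 0 \/ br w e <> 0).
Proof.
move=> L_sub L_semiprime L_quot essE w_neq0.
have [x [[Lx Cx] brxw_neq0]] := L_quot w w w_neq0.
have [Lxw Lwx] := Cx w (gen_by_self w L_sub.1.1).
have zero_of_ann c : L c -> annihilates E c -> c = 0.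
  exact: annihilator_essential_eq0 L_sub L_semiprime essE.
apply: NNPP => no_witness.
have Aw : annihilates E w.
  move=> e Ee; split; apply: NNPP => brew_neq0;
    by apply: no_witness; exists e; tauto.
have [Awx Axw] := annihilates_stable essE.1 Aw Lx.
by case: brxw_neq0; apply; apply: zero_of_ann.
Qed.

End RightLeibniz.

Theorem proposition3p13 (F : fieldType) (Q : lmodType F) (br : Q -> Q -> Q)
  (L : Q -> Prop) :
  bracket_bilinear br -> right_leibniz br ->
  subalgebra br L -> semiprime br L ->
  algebra_of_quotients br L ->
  forall I : Q -> Prop, essential_ideal br L I ->
  algebra_of_quotients br I.
Proof.
move=> br_bil br_leib L_sub L_semiprime L_quot I essI p q p_neq0.
have idI := essI.1.
pose J x := colon br L q x /\ I x.
have essJ : essential_ideal br L J.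
  exact: essential_meet (colon_essential br_bil br_leib q L_sub L_quot) essI.
pose S x := J x /\ colon_into br L I q x.
have idJ := essJ.1.
have essS : essential_ideal br L S.
  apply: (essential_of_brackets L_semiprime essJ) => [|x y Jx Jy].
    exact: ideal_meet idJ (colon_into_subspace br_bil L q idI.1)
      (colon_into_stable br_bil br_leib idI).
  split; first exact: (ideal_stable idJ Jx (ideal_sub idJ Jy)).1.
  by case: Jx Jy => [Cx Ix] [Cy Iy]; apply: colon_into_br.
have [e [[[_ Ie] CIe] bre_neq0]] :=
  essential_ideal_faithful br_bil br_leib L_sub L_semiprime L_quot essS p_neq0.
have sIL x : I x -> L x by apply: ideal_sub idI.
by exists e; split=> //; split=> // u /(gen_by_mono sIL); apply: CIe.
Qed.
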